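(* In the public goods model with $k\ge n$, for any $\alpha\in(0,1]$, any allocation that is $\alpha$-RRS is also $\alpha\cdot\frac{n}{2n-1}$-Prop. Further, when $n$ divides $k$, any $\alpha$-RRS allocation is $\alpha$-Prop.
   Context: Public goods model: agents $[n]$, goods $G=[m]$, integer $0\le k\le m$, nonnegative integer additive values $v_{ij}$, $v_i(S)=\sum_{j\in S}v_{ij}$; an allocation is $x\subseteq G$ with $|x|\le k$. $\mathrm{Prop}_i=\frac1n\max_{|y|\le k}v_i(y)$, $\mathrm{RRS}_i=\max_{|y|\le\lfloor k/n\rfloor}v_i(y)$. $x$ is $\beta$-RRS if $v_i(x)\ge\beta\,\mathrm{RRS}_i$ for all $i$, and $\beta$-Prop if $v_i(x)\ge\beta\,\mathrm{Prop}_i$ for all $i$. *)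

From mathcomp Require Import all_boot all_order all_algebra.
Set Implicit Arguments. Unset Strict Implicit. Unset Printing Implicit Defensive.
Import Order.TTheory GRing.Theory Num.Theory.

(* Public goods model: agents 'I_n, goods 'I_m, additive valuations
   v i j : nat.  An allocation is a set x of goods with #|x| <= k. *)

Definition val (n m : nat) (v : 'I_n -> 'I_m -> nat) (i : 'I_n) (S : {set 'I_m}) : nat :=
  \sum_(j in S) v i j.

Definition best (n m : nat) (v : 'I_n -> 'I_m -> nat) (i : 'I_n) (b : nat) : nat :=
  \max_(y : {set 'I_m} | #|y| <= b) val v i y.

Definition is_alloc (m k : nat) (x : {set 'I_m}) : bool := #|x| <= k.

Local Open Scope ring_scope.

Definition PropShare (n m k : nat) (v : 'I_n -> 'I_m -> nat) (i : 'I_n) : rat :=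
  (best v i k)%:R / n%:R.

Definition RRS (n m k : nat) (v : 'I_n -> 'I_m -> nat) (i : 'I_n) : rat :=
  (best v i (k %/ n)%N)%:R.

Definition is_beta_RRS (n m k : nat) (v : 'I_n -> 'I_m -> nat) (beta : rat)
  (x : {set 'I_m}) : Prop :=
  forall i : 'I_n, beta * RRS k v i <= (val v i x)%:R.

Definition is_beta_Prop (n m k : nat) (v : 'I_n -> 'I_m -> nat) (beta : rat)
  (x : {set 'I_m}) : Prop :=
  forall i : 'I_n, beta * PropShare k v i <= (val v i x)%:R.

From Pilot Require Import Defs.
From mathcomp Require Import all_boot all_order all_algebra.
From mathcomp Require Import zify.
Set Implicit Arguments.
Unset Strict Implicit.
Unset Printing Implicit Defensive.

Import Order.TTheory GRing.Theory Num.Theory.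

(* A bundle of at most c * q goods splits into c bundles of at most q goods,
   so best_i(c q) <= c best_i(q).  With q = floor(k/n) and k <= c q this gives
   Prop_i <= (c/n) RRS_i, where c = 2n - 1 always works (k mod n <= (n-1) q as q >= 1)
   and c = n works when n divides k. *)

Lemma exists_subset_card (T : finType) (A : {set T}) (q : nat) :
  q <= #|A| -> exists2 B : {set T}, B \subset A & #|B| = q.
Proof.
case/card_geqP=> s [s_uniq s_size sA].
exists [set x in s]; first by apply/subsetP=> x; rewrite inE => /sA.
by rewrite cardsE (card_uniqP s_uniq).
Qed.

Section BestBundles.

Variables (n m : nat) (v : 'I_n -> 'I_m -> nat) (i : 'I_n).

Lemma val_le_best (q : nat) (y : {set 'I_m}) :
  #|y| <= q -> Defs.val v i y <= best v i q.
Proof. exact: (leq_bigmax_cond (P := fun y : {set 'I_m} => #|y| <= q)). Qed.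

Lemma val_le_mul_best (c q : nat) (y : {set 'I_m}) :
  #|y| <= c * q -> Defs.val v i y <= c * best v i q.
Proof.
elim: c y => [|c IHc] y y_size.
  by move: y_size; rewrite leqn0 cards_eq0 => /eqP ->; rewrite /Defs.val big_set0.
have [y_small | y_large] := leqP #|y| q.
  by rewrite mulSn (leq_trans (val_le_best y_small)) ?leq_addr.
have [z zy z_size] := exists_subset_card (ltnW y_large).
rewrite /Defs.val (big_setID z) /= (setIidPr zy) mulSn leq_add ?val_le_best ?z_size //.
by apply: IHc; rewrite cardsDS // z_size leq_subLR -mulSn.
Qed.

Lemma best_le_mul_best (b c q : nat) : b <= c * q -> best v i b <= c * best v i q.
Proof.
move=> bcq; apply/bigmax_leqP=> y y_size.
exact/val_le_mul_best/(leq_trans y_size bcq).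
Qed.

End BestBundles.

Lemma leq_double_pred_mul_divn (n k : nat) :
  0 < n -> n <= k -> k <= (2 * n - 1) * (k %/ n).
Proof.
move=> n_gt0 nk.
have q_gt0 : 0 < k %/ n by rewrite divn_gt0.
have r_lt : k %% n < n := ltn_pmod k n_gt0.
rewrite {1}(divn_eq k n); nia.
Qed.

Local Open Scope ring_scope.

Section ProportionalityFromRRS.

Variables (n m k : nat) (v : 'I_n -> 'I_m -> nat).

Lemma scaled_PropShare_le_RRS (c : nat) (i : 'I_n) :
  (0 < n)%N -> (0 < c)%N -> (k <= c * (k %/ n))%N ->
  n%:R / c%:R * PropShare k v i <= RRS k v i.
Proof.
move=> n_gt0 c_gt0 kc.
have n_neq0 : n%:R != 0 :> rat by rewrite pnatr_eq0 -lt0n.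
rewrite /PropShare /RRS mulrC mulrA divfK // ler_pdivrMr ?ltr0n //.
by rewrite -natrM ler_nat mulnC best_le_mul_best.
Qed.

Lemma beta_RRS_scaled_Prop (alpha : rat) (c : nat) (x : {set 'I_m}) :
  (0 < n)%N -> (0 < c)%N -> (k <= c * (k %/ n))%N -> 0 <= alpha ->
  is_beta_RRS k v alpha x -> is_beta_Prop k v (alpha * (n%:R / c%:R)) x.
Proof.
move=> n_gt0 c_gt0 kc alpha_ge0 x_RRS i.
rewrite -mulrA (le_trans _ (x_RRS i)) // ler_wpM2l //.
exact: scaled_PropShare_le_RRS.
Qed.

End ProportionalityFromRRS.

Theorem lemma2 (n m k : nat) (v : 'I_n -> 'I_m -> nat) (alpha : rat)
  (x : {set 'I_m}) :
  (0 < n)%N -> (n <= k)%N -> (k <= m)%N ->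
  0 < alpha -> alpha <= 1 ->
  is_alloc k x ->
  is_beta_RRS k v alpha x ->
  is_beta_Prop k v (alpha * (n%:R / (2 * n - 1)%N%:R)) x /\
  ((n %| k)%N -> is_beta_Prop k v alpha x).
Proof.
move=> n_gt0 nk _ alpha_gt0 _ _ x_RRS.
have alpha_ge0 := ltW alpha_gt0.
split.
  apply: beta_RRS_scaled_Prop x_RRS => //; last exact: leq_double_pred_mul_divn.
  by rewrite subn_gt0 mul2n -addnn -addn1 leq_add.
move=> n_dvd_k.
have k_le : (k <= n * (k %/ n))%N by rewrite mulnC divnK.
have := beta_RRS_scaled_Prop n_gt0 n_gt0 k_le alpha_ge0 x_RRS.
by rewrite divff ?mulr1 // pnatr_eq0 -lt0n.
Qed.
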